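(* Let $P$ be a special product rule, $\Sigma$ a finite alphabet, $\mathcal A=\langle X,F,\Delta\rangle$ a polynomial $P$-automaton with finite $X$, and $x_1\in X$. For $n\in\mathbb N$ let $I_n\subseteq\mathbb Q[X]$ be the polynomial ideal generated by $\{\tilde\Delta_wx_1: w\in\Sigma^*, |w|\le n\}$ (note $I_n\subseteq\mathbb Q_0[X]$). Then for all $n$: (1) $I_n\subseteq I_{n+1}$; (2) $\tilde\Delta_a(I_n)\subseteq I_{n+1}$ for every $a\in\Sigma$; (3) $I_{n+1}=I_n+\langle\tilde\Delta_a(I_n): a\in\Sigma\rangle$, where $\langle S\rangle$ is the ideal generated by $S$; (4) if $I_n=I_{n+1}$ then $I_n=I_{n+m}$ for all $m\ge0$.
   Context: $\mathbb Q_0[X]$ is the set of polynomials of $\mathbb Q[X]$ with zero constant term. Terms over $X$ are generated by $u,v::=x\mid 0\mid c\cdot u\mid u+v\mid u*v$; a product rule is a term $P$ over $\{x,\dot x,y,\dot y\}$. $u\approx v$ iff $u,v$ denote the same polynomial. $P$ is special if $P(x+y,\dot x+\dot y,z,\dot z)\approx P(x,\dot x,z,\dot z)+P(y,\dot y,z,\dot z)$, $P(x,\dot x,y*z,P(y,\dot y,z,\dot z))\approx P(x*y,P(x,\dot x,y,\dot y),z,\dot z)$, $P(x,\dot x,y,\dot y)\approx P(y,\dot y,x,\dot x)$. For special $P$, every $D:X\to\mathbb Q_0[X]$ has a unique $\mathbb Q$-linear extension $\tilde D:\mathbb Q_0[X]\to\mathbb Q_0[X]$ with $\tilde Dx=Dx$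 and $\tilde D(\alpha\beta)=P(\alpha,\tilde D\alpha,\beta,\tilde D\beta)$. A polynomial $P$-automaton is $\mathcal A=\langle X,F,\Delta\rangle$ with $F:X\to\mathbb Q$ and $\Delta_a:X\to\mathbb Q_0[X]$ for $a\in\Sigma$. For words, $\tilde\Delta_\varepsilon\alpha=\alpha$ and $\tilde\Delta_{aw}\alpha=\tilde\Delta_w(\tilde\Delta_a\alpha)$. *)

From mathcomp Require Import all_boot all_algebra.
From mathcomp Require Import mpoly.
Set Implicit Arguments. Unset Strict Implicit. Unset Printing Implicit Defensive.
Import GRing.Theory.
Local Open Scope ring_scope.

Inductive term (V : Type) : Type :=
  | TVar of V
  | TZero
  | TScale of rat & term V
  | TAdd of term V & term V
  | TMul of term V & term V.

(* Denotation of a term in a polynomial ring, given values for the variables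
   (this is substitution followed by denotation). *)
Fixpoint teval (n : nat) (V : Type) (env : V -> {mpoly rat[n]}) (u : term V)
  : {mpoly rat[n]} :=
  match u with
  | TVar x => env x
  | TZero => 0
  | TScale c u => c *: teval env u
  | TAdd u v => teval env u + teval env v
  | TMul u v => teval env u * teval env v
  end.

(* Environment for a product rule P over {x, x', y, y'} = 'I_4 (in this order). *)
Definition env4 (n : nat) (a b c d : {mpoly rat[n]}) : 'I_4 -> {mpoly rat[n]} :=
  fun i => nth 0 [:: a; b; c; d] i.

Definition papp (n : nat) (P : term 'I_4) (a b c d : {mpoly rat[n]}) :=
  teval (env4 a b c d) P.

(* Variables x,x',y,y',z,z' are 'X_0..'X_5 in {mpoly rat[6]};
   x,x',y,y' are 'X_0..'X_3 in {mpoly rat[4]}. *)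
Definition special (P : term 'I_4) : Prop :=
  let X6 := fun i : nat => 'X_(inord i) : {mpoly rat[6]} in
  let X4 := fun i : nat => 'X_(inord i) : {mpoly rat[4]} in
  [/\ papp P (X6 0%N + X6 2%N) (X6 1%N + X6 3%N) (X6 4%N) (X6 5%N)
      = papp P (X6 0%N) (X6 1%N) (X6 4%N) (X6 5%N)
        + papp P (X6 2%N) (X6 3%N) (X6 4%N) (X6 5%N),
      papp P (X6 0%N) (X6 1%N) (X6 2%N * X6 4%N)
           (papp P (X6 2%N) (X6 3%N) (X6 4%N) (X6 5%N))
      = papp P (X6 0%N * X6 2%N) (papp P (X6 0%N) (X6 1%N) (X6 2%N) (X6 3%N))
           (X6 4%N) (X6 5%N)
    & papp P (X4 0%N) (X4 1%N) (X4 2%N) (X4 3%N)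
      = papp P (X4 2%N) (X4 3%N) (X4 0%N) (X4 1%N)].

Definition Q0 (n : nat) (p : {mpoly rat[n]}) : Prop := p@_(@mnm0 n) = 0.

Definition is_P_extension (n : nat) (P : term 'I_4) (D : 'I_n -> {mpoly rat[n]})
  (Dt : {mpoly rat[n]} -> {mpoly rat[n]}) : Prop :=
  [/\ forall p, Q0 p -> Q0 (Dt p),
      forall (c : rat) p q, Q0 p -> Q0 q -> Dt (c *: p + q) = c *: Dt p + Dt q,
      forall i, Dt 'X_i = D i
    & forall p q, Q0 p -> Q0 q -> Dt (p * q) = papp P p (Dt p) q (Dt q)].

(* ~Delta_w, with ~Delta_{aw} alpha = ~Delta_w (~Delta_a alpha). *)
Definition Dword (n : nat) (Sigma : Type) (Dt : Sigma -> {mpoly rat[n]} -> {mpoly rat[n]})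
  (w : seq Sigma) (p : {mpoly rat[n]}) : {mpoly rat[n]} :=
  foldl (fun q a => Dt a q) p w.

Definition ideal_gen (n : nat) (S : {mpoly rat[n]} -> Prop) (p : {mpoly rat[n]}) : Prop :=
  exists s : seq ({mpoly rat[n]} * {mpoly rat[n]}),
    (forall q, q \in s -> S q.2) /\ p = \sum_(q <- s) q.1 * q.2.

Definition ideal_add (n : nat) (I J : {mpoly rat[n]} -> Prop) (p : {mpoly rat[n]}) : Prop :=
  exists q r, I q /\ J r /\ p = q + r.

Definition Iseq (k : nat) (Sigma : Type) (Dt : Sigma -> {mpoly rat[k]} -> {mpoly rat[k]})
  (x1 : 'I_k) (n : nat) : {mpoly rat[k]} -> Prop :=
  ideal_gen (fun p => exists w : seq Sigma, (size w <= n)%N /\ p = Dword Dt w 'X_x1).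

Definition set_eq (T : Type) (A B : T -> Prop) : Prop := forall x, A x <-> B x.

(* The heart of the matter is (2): a P-extension ~D maps the ideal generated by a set
   S of polynomials without constant term into the ideal generated by S and ~D(S).
   For r * g with g in S write r = c + r0 with r0 in Q_0[X]; then
   ~D(r0 g) = P(r0, ~D r0, g, ~D g), while P(r0, ~D r0, 0, 0) = ~D(r0 * 0) = 0, and a
   polynomial expression changes by an element of <g, ~D g> when its last two
   arguments move from 0 to g and ~D g.  Statement (3) then follows by splitting each
   word of length n + 1 as w a, and (4) because I_(n+1) is a function of I_n. *)
From mathcomp Require Import all_boot all_algebra.
From mathcomp Require Import mpoly.
Set Implicit Arguments. Unset Strict Implicit. Unset Printing Implicit Defensive.
Import GRing.Theory.
Local Open Scope ring_scope.

Section Ideals.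
Variable k : nat.
Notation MP := {mpoly rat[k]}.

Lemma Q0_0 : Q0 (0 : MP).
Proof. by rewrite /Q0 mcoeff0. Qed.

Lemma Q0D (p q : MP) : Q0 p -> Q0 q -> Q0 (p + q).
Proof. by rewrite /Q0 mcoeffD => -> ->; rewrite addr0. Qed.

Lemma Q0Ml (r p : MP) : Q0 p -> Q0 (r * p).
Proof. by rewrite /Q0 (rmorphM (mcoeff 0%MM)) /= => ->; rewrite mulr0. Qed.

Lemma Q0Z (c : rat) (p : MP) : Q0 p -> Q0 (c *: p).
Proof. by rewrite /Q0 mcoeffZ => ->; rewrite mulr0. Qed.

Lemma Q0X (i : 'I_k) : Q0 ('X_i : MP).
Proof.
rewrite /Q0 mcoeffX; case: eqP => // /(congr1 (fun m : 'X_{1..k} => m i)).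
by rewrite mnm1E eqxx mnm0E.
Qed.

Lemma Q0_subC (r : MP) : Q0 (r - (r@_0%MM)%:MP).
Proof. by rewrite /Q0 mcoeffB mcoeffC eqxx mulr1 subrr. Qed.

Definition is_ideal (I : MP -> Prop) : Prop :=
  [/\ I 0, forall p q, I p -> I q -> I (p + q) & forall r p, I p -> I (r * p)].

Lemma ideal_gen_is_ideal (S : MP -> Prop) : is_ideal (ideal_gen S).
Proof.
split.
- by exists [::]; rewrite big_nil.
- move=> p q [s [hs ->]] [t [ht ->]]; exists (s ++ t); rewrite big_cat; split => //.
  by move=> x; rewrite mem_cat => /orP [/hs|/ht].
- move=> r p [s [hs ->]]; exists [seq (r * x.1, x.2) | x <- s]; split.
    by move=> _ /mapP [y /hs h ->].
  by rewrite big_map mulr_sumr; apply: eq_bigr => x _; rewrite mulrA.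
Qed.

Lemma ideal_gen_min (S I : MP -> Prop) p : is_ideal I -> (forall g, S g -> I g) ->
  ideal_gen S p -> I p.
Proof.
move=> [I0 ID IM] SI [s [hs ->]]; elim: s hs => [|x s IH] hs; first by rewrite big_nil.
rewrite big_cons; apply: ID; first by apply/IM/SI/hs; rewrite mem_head.
by apply: IH => y hy; apply: hs; rewrite inE hy orbT.
Qed.

Lemma ideal_gen0 (S : MP -> Prop) : ideal_gen S 0.
Proof. by case: (ideal_gen_is_ideal S). Qed.

Lemma ideal_genD (S : MP -> Prop) p q :
  ideal_gen S p -> ideal_gen S q -> ideal_gen S (p + q).
Proof. by case: (ideal_gen_is_ideal S) => _ SD _; apply: SD. Qed.

Lemma ideal_genMl (S : MP -> Prop) r p : ideal_gen S p -> ideal_gen S (r * p).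
Proof. by case: (ideal_gen_is_ideal S) => _ _ SM; apply: SM. Qed.

Lemma ideal_genZ (S : MP -> Prop) c p : ideal_gen S p -> ideal_gen S (c *: p).
Proof. by rewrite -mul_mpolyC; apply: ideal_genMl. Qed.

Lemma ideal_gen_gen (S : MP -> Prop) g : S g -> ideal_gen S g.
Proof.
by move=> Sg; exists [:: (1, g)]; rewrite big_seq1 mul1r; split => // x /[!inE] /eqP ->.
Qed.

Lemma ideal_gen_sub (S T : MP -> Prop) p : (forall g, S g -> ideal_gen T g) ->
  ideal_gen S p -> ideal_gen T p.
Proof. by apply: ideal_gen_min; apply: ideal_gen_is_ideal. Qed.

Lemma ideal_add_is_ideal (I J : MP -> Prop) :
  is_ideal I -> is_ideal J -> is_ideal (ideal_add I J).
Proof.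
move=> [I0 ID IM] [J0 JD JM]; split.
- by exists 0, 0; rewrite addr0.
- move=> _ _ [u [v [hu [hv ->]]]] [u' [v' [hu' [hv' ->]]]].
  by exists (u + u'), (v + v'); rewrite addrACA; split; [apply: ID | split; [apply: JD|]].
- move=> r _ [u [v [hu [hv ->]]]].
  by exists (r * u), (r * v); rewrite mulrDr; split; [apply: IM | split; [apply: JM|]].
Qed.

Lemma teval_sub_ideal (V : Type) (S : MP -> Prop) (e1 e2 : V -> MP) (u : term V) :
  (forall x, ideal_gen S (e1 x - e2 x)) -> ideal_gen S (teval e1 u - teval e2 u).
Proof.
move=> he; elim: u => [x||c u IH|u IHu v IHv|u IHu v IHv] /=.
- exact: he.
- by rewrite subrr; apply: ideal_gen0.
- by rewrite -scalerBr; apply: ideal_genZ.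
- by rewrite opprD addrACA; apply: ideal_genD.
- have -> : teval e1 u * teval e1 v - teval e2 u * teval e2 v =
      teval e1 u * (teval e1 v - teval e2 v) + (teval e1 u - teval e2 u) * teval e2 v.
    by rewrite mulrBr mulrBl addrA subrK.
  by apply: ideal_genD; [|rewrite mulrC]; apply: ideal_genMl.
Qed.

End Ideals.

Arguments Q0_0 {k}.
#[local] Hint Resolve Q0_0 : core.

Section Extension.
Variables (k : nat) (P : term 'I_4) (D : 'I_k -> {mpoly rat[k]}).
Variable Dt : {mpoly rat[k]} -> {mpoly rat[k]}.
Hypothesis hD : is_P_extension P D Dt.
Notation MP := {mpoly rat[k]}.

Lemma ext_Q0 p : Q0 p -> Q0 (Dt p).
Proof. by case: hD => ext_Q0 _ _ _; apply: ext_Q0. Qed.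

Lemma ext_add (p q : MP) : Q0 p -> Q0 q -> Dt (p + q) = Dt p + Dt q.
Proof. by case: hD => _ hl _ _ hp hq; rewrite -[p]scale1r hl // !scale1r. Qed.

Lemma ext0 : Dt 0 = 0.
Proof.
have := ext_add Q0_0 Q0_0; rewrite addr0 => e.
by apply: (@addrI _ (Dt 0)); rewrite addr0 -e.
Qed.

Lemma extZ c (p : MP) : Q0 p -> Dt (c *: p) = c *: Dt p.
Proof. by case: hD => _ hl _ _ hp; rewrite -[c *: p]addr0 hl // ext0 addr0. Qed.

Lemma ext_mul (p q : MP) : Q0 p -> Q0 q -> Dt (p * q) = papp P p (Dt p) q (Dt q).
Proof. by case: hD => _ _ _ ext_mul; apply: ext_mul. Qed.

Lemma ext_Ml_ideal (S : MP -> Prop) r g : Q0 g -> ideal_gen S g -> ideal_gen S (Dt g) ->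
  ideal_gen S (Dt (r * g)).
Proof.
move=> g0 Sg SDg; set r0 := r - (r@_0%MM)%:MP.
have r00 : Q0 r0 by apply: Q0_subC.
have -> : r * g = r@_0%MM *: g + r0 * g by rewrite mulrBl mul_mpolyC addrC subrK.
rewrite ext_add; [|exact: Q0Z|exact: Q0Ml].
rewrite extZ //; apply: ideal_genD; first exact: ideal_genZ.
have Pr00 : papp P r0 (Dt r0) 0 0 = 0.
  by have := ext_mul r00 Q0_0; rewrite mulr0 ext0 => <-.
rewrite ext_mul // -[papp _ _ _ _ _]subr0 -Pr00.
apply: teval_sub_ideal => -[[|[|[|[|i]]]] lti] //=; rewrite ?subrr ?subr0 //; exact: ideal_gen0.
Qed.

Lemma ext_ideal_gen (S T : MP -> Prop) p :
  (forall g, S g -> [/\ Q0 g, ideal_gen T g & ideal_gen T (Dt g)]) ->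
  ideal_gen S p -> ideal_gen T (Dt p).
Proof.
move=> ST Sp.
suff [] : [/\ Q0 p, ideal_gen T p & ideal_gen T (Dt p)] by [].
apply: (ideal_gen_min (I := fun q => [/\ Q0 q, ideal_gen T q & ideal_gen T (Dt q)]) _ ST Sp).
split.
- by rewrite ext0; split; [exact: Q0_0 | exact: ideal_gen0 ..].
- move=> u v [u0 Tu TDu] [v0 Tv TDv].
  by rewrite ext_add //; split; [exact: Q0D | exact: ideal_genD ..].
- move=> r u [u0 Tu TDu].
  by split; [exact: Q0Ml | exact: ideal_genMl | exact: ext_Ml_ideal].
Qed.

End Extension.

Section Automaton.
Variables (k : nat) (P : term 'I_4) (Sigma : Type).
Variables (Delta : Sigma -> 'I_k -> {mpoly rat[k]}) (Dt : Sigma -> {mpoly rat[k]} -> {mpoly rat[k]}).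
Hypothesis hD : forall a, is_P_extension P (Delta a) (Dt a).
Variable x1 : 'I_k.
Notation MP := {mpoly rat[k]}.
Notation I := (Iseq Dt x1).

Definition ideal_step (J : MP -> Prop) : MP -> Prop :=
  ideal_add J (ideal_gen (fun q => exists a r, J r /\ q = Dt a r)).

Lemma Q0_Dword w p : Q0 p -> Q0 (Dword Dt w p).
Proof. by elim: w p => [|a w IH] p p0 //=; apply/IH/(ext_Q0 (hD a)). Qed.

Lemma Dword_rcons w a p : Dword Dt (rcons w a) p = Dt a (Dword Dt w p).
Proof. by rewrite /Dword foldl_rcons. Qed.

Lemma Iseq_gen n w : (size w <= n)%N -> I n (Dword Dt w 'X_x1).
Proof. by move=> hw; apply: ideal_gen_gen; exists w. Qed.

Lemma Iseq_mono n p : I n p -> I n.+1 p.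
Proof. by apply: ideal_gen_sub => _ [w [hw ->]]; apply/Iseq_gen/leqW. Qed.

Lemma Iseq_ext n a p : I n p -> I n.+1 (Dt a p).
Proof.
apply: (ext_ideal_gen (hD a)) => _ [w [hw ->]]; split.
- exact/Q0_Dword/Q0X.
- exact/Iseq_gen/leqW.
- by rewrite -Dword_rcons; apply: Iseq_gen; rewrite size_rcons.
Qed.

Lemma Iseq_step n : set_eq (I n.+1) (ideal_step (I n)).
Proof.
move=> p; split.
- apply: ideal_gen_min; first exact/ideal_add_is_ideal/ideal_gen_is_ideal/ideal_gen_is_ideal.
  move=> _ [w [hw ->]]; have [hwn|] := leqP (size w) n.
    exists (Dword Dt w 'X_x1), 0; rewrite addr0.
    by split; [apply: Iseq_gen | split; [apply: ideal_gen0|]].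
  case/lastP: w hw => [|w a] //; rewrite size_rcons ltnS => hw _.
  exists 0, (Dword Dt (rcons w a) 'X_x1); rewrite add0r; split; first exact: ideal_gen0.
  split => //; apply: ideal_gen_gen; exists a, (Dword Dt w 'X_x1).
  by rewrite Dword_rcons; split => //; apply: Iseq_gen.
- move=> [u [v [hu [hv ->]]]]; apply: ideal_genD; first exact: Iseq_mono.
  by apply: ideal_gen_sub hv => _ [a [r [hr ->]]]; apply: Iseq_ext.
Qed.

Lemma ideal_step_sub (J K : MP -> Prop) p :
  (forall q, J q -> K q) -> ideal_step J p -> ideal_step K p.
Proof.
move=> JK [u [v [hu [hv ->]]]]; exists u, v; split; first exact: JK.
split => //; apply: ideal_gen_sub hv => _ [a [r [hr ->]]].
by apply: ideal_gen_gen; exists a, r; split => //; apply: JK.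
Qed.

Lemma Iseq_stable n : set_eq (I n) (I n.+1) -> forall m, set_eq (I n) (I (n + m)).
Proof.
move=> Hn; elim=> [|m IH] p; first by rewrite addn0.
rewrite addnS Hn !Iseq_step.
by split; apply: ideal_step_sub => q /IH.
Qed.

End Automaton.

Theorem mainTheorem13 (P : term 'I_4) (Sigma : finType) (k : nat)
  (F : 'I_k -> rat) (Delta : Sigma -> 'I_k -> {mpoly rat[k]})
  (Dt : Sigma -> {mpoly rat[k]} -> {mpoly rat[k]}) (x1 : 'I_k) :
  special P ->
  (forall a i, Q0 (Delta a i)) ->
  (forall a, is_P_extension P (Delta a) (Dt a)) ->
  forall n : nat,
  [/\ forall p, Iseq Dt x1 n p -> Iseq Dt x1 n.+1 p,
      forall a p, Iseq Dt x1 n p -> Iseq Dt x1 n.+1 (Dt a p),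
      set_eq (Iseq Dt x1 n.+1)
        (ideal_add (Iseq Dt x1 n)
           (ideal_gen (fun q => exists a r, Iseq Dt x1 n r /\ q = Dt a r)))
    & set_eq (Iseq Dt x1 n) (Iseq Dt x1 n.+1) ->
      forall m, set_eq (Iseq Dt x1 n) (Iseq Dt x1 (n + m))].
Proof.
move=> _ _ hD n; split.
- exact: Iseq_mono.
- exact: Iseq_ext hD x1 n.
- exact: Iseq_step hD x1 n.
- exact: Iseq_stable hD x1 n.
Qed.
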